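(* For an integer $b\ge2$ let $O_{12(b-2)+k}$, $k\in\{1,5,7\}$, denote respectively $Y(b;(2,1),(3,2),(4,3))$, $Y(b;(2,1),(3,1),(4,3))$, $Y(b;(2,1),(3,2),(4,1))$, and let $X$ be its canonical negative definite plumbed 4-manifold, with intersection form $Q_X$ on $H_2(X;\mathbb{Z})$. Then for every $n\ge1$, the orthogonal direct sum of $n$ copies of $Q_X$ does not embed (as a lattice, i.e. by a homomorphism preserving the pairing) into the standard negative definite lattice $(\mathbb{Z}^{N},\langle-1\rangle^{N})$ with $N=n\cdot\mathrm{rk}(Q_X)$.
   Context: $Y(b;(\alpha_1,\beta_1),\dots,(\alpha_r,\beta_r))$ with $\alpha_i>\beta_i>0$ coprime and $b-\sum\beta_i/\alpha_i>0$ is the boundary of its canonical negative definite plumbing: a central vertex of weight $-b$ and, for each $i$, a leg with weights $-a_i^1,\dots,-a_i^{s_i}$ where $\alpha_i/\beta_i=a_i^1-1/(a_i^2-\cdots-1/a_i^{s_i})$, $a_i^j\ge2$ (vertices are disk bundles over $S^2$ of the given Euler numbers, edges are plumbings). Concretely: for $k=1$ the legs are $(-2)$, $(-2,-2)$, $(-2,-2,-2)$; for $k=5$ they are $(-2)$, $(-3)$, $(-2,-2,-2)$; for $k=7$ they are $(-2)$, $(-2,-2)$, $(-4)$. $Q_X$ is the intersection form in the basis of spheres corresponding to vertices. $(\mathbb{Z}^N,\langle-1\rangle^N)$ is $\mathbb{Z}^N$ with $e_i\cdot e_j=-\delta_{ij}$. *)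

From HB Require Import structures.
From mathcomp Require Import all_boot all_order all_algebra.
Set Implicit Arguments. Unset Strict Implicit. Unset Printing Implicit Defensive.
Import Order.TTheory GRing.Theory Num.Theory.
Local Open Scope ring_scope.

(** Hirzebruch-Jung (negative) continued fraction expansion
    alpha/beta = a1 - 1/(a2 - ... - 1/as), a_j >= 2, for alpha > beta > 0.
    [fuel] bounds the recursion (fuel = alpha suffices). *)
Fixpoint hj_cf_aux (fuel alpha beta : nat) : seq nat :=
  match fuel with
  | 0 => [::]
  | fuel'.+1 =>
      if beta == 0%N then [::]
      else let a := ((alpha + beta - 1) %/ beta)%N in
           a :: hj_cf_aux fuel' beta (a * beta - alpha)%N
  end.
Definition hj_cf (alpha beta : nat) : seq nat := hj_cf_aux alpha alpha beta.

Definition seifert_data (k : nat) : seq (nat * nat) :=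
  if k == 1%N then [:: (2,1); (3,2); (4,3)]%N
  else if k == 5%N then [:: (2,1); (3,1); (4,3)]%N
  else [:: (2,1); (3,2); (4,1)]%N.

(** Legs of the canonical star-shaped plumbing: list of (-)weights per leg. *)
Definition legs_of (d : seq (nat * nat)) : seq (seq nat) :=
  [seq hj_cf p.1 p.2 | p <- d].

(** Non-central vertices, as (leg index, position in leg, a_i^j). *)
Definition leg_verts (legs : seq (seq nat)) : seq (nat * nat * nat) :=
  flatten [seq [seq (l, t, nth 0%N (nth [::] legs l) t)
               | t <- iota 0 (size (nth [::] legs l))]
          | l <- iota 0 (size legs)].

(** Vertex set of the plumbing graph: None = central vertex. *)
Definition pvert (legs : seq (seq nat)) : finType :=
  option 'I_(size (leg_verts legs)).

Definition lv (legs : seq (seq nat)) (i : 'I_(size (leg_verts legs))) :=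
  nth (0, 0, 0)%N (leg_verts legs) i.

Definition lv_leg legs (i : 'I_(size (leg_verts legs))) : nat := (lv i).1.1.
Definition lv_pos legs (i : 'I_(size (leg_verts legs))) : nat := (lv i).1.2.
Definition lv_wt legs (i : 'I_(size (leg_verts legs))) : nat := (lv i).2.

Definition plumb_form (b : nat) (legs : seq (seq nat))
    (x y : pvert legs) : int :=
  match x, y with
  | None, None => - (b%:Z)
  | None, Some j => if lv_pos j == 0%N then 1 else 0
  | Some i, None => if lv_pos i == 0%N then 1 else 0
  | Some i, Some j =>
      if i == j then - ((lv_wt i)%:Z)
      else if (lv_leg i == lv_leg j) &&
              (((lv_pos i).+1 == lv_pos j) || ((lv_pos j).+1 == lv_pos i))
           then 1 else 0
  end.

Definition X_legs (k : nat) := legs_of (seifert_data k).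
Definition QX (b k : nat) : pvert (X_legs k) -> pvert (X_legs k) -> int :=
  @plumb_form b (X_legs k).

Definition bform (V : finType) (M : V -> V -> int)
    (u v : {ffun V -> int}) : int :=
  \sum_(x : V) \sum_(y : V) u x * M x y * v y.

Definition osum (n : nat) (V : finType) (M : V -> V -> int)
    (p q : 'I_n * V) : int :=
  if p.1 == q.1 then M p.2 q.2 else 0.

Definition negstd (N : nat) (i j : 'I_N) : int := - ((i == j)%:R).

Definition lattice_embeds (V W : finType) (MV : V -> V -> int)
    (MW : W -> W -> int) : Prop :=
  exists f : {ffun V -> int} -> {ffun W -> int},
    (forall u v, f (u + v) = f u + f v) /\
    (forall u v, bform MW (f u) (f v) = bform MV u v).

From HB Require Import structures.
From mathcomp Require Import all_boot all_order all_algebra ring lra zify.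
Set Implicit Arguments.
Unset Strict Implicit.
Unset Printing Implicit Defensive.
Import Order.TTheory GRing.Theory Num.Theory.
Local Open Scope ring_scope.

(* Suppose the n-fold sum of Q_X embeds in <-1>^N, N = n rk Q_X, sending the basis
   vector p to phi_p.  The Gram matrix of the phi_p is nonsingular, so every
   coordinate vector e_i is a rational combination sum_p y_p phi_p; reading off
   e_i . phi_p, the i-th coordinates x_j : V -> Z of the images of the j-th copy
   satisfy x_j = -Q_X y_j, and e_i . e_i = 1 becomes sum_j x_j^T (-Q_X)^-1 x_j = 1.
   For each of the three plumbings, with M = |det Q_X| / 2, the form
   12 M (-Q_X)^-1 is integral and equals E = M P + S^2, where S x is M times the
   centre coordinate of (-Q_X)^-1 x and P is built from the inverse forms of the
   legs; hence sum_j E x_j = 12 M.  Choosing i with phi_(j0, a) i <> 0 for the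
   (-2)-vertex a of the leg (2) forces E x_j0 > 6 M, so E x_j < 6 M for j <> j0.
   This leaves so few shapes for the x_j that the sum cannot be 12 M modulo 4
   (modulo 36 for k = 7). *)

Definition nonsingular_form {V : finType} (Q : V -> V -> int) :=
  forall w : V -> rat, (forall p, \sum_q (Q p q)%:~R * w q = 0) -> forall p, w p = 0.

(* [E x] is [D] times x^T (-Q)^-1 x, stated through y = (-Q)^-1 x. *)
Definition scaled_dual_form {V : finType} (Q : V -> V -> int) (D : int)
    (E : (V -> int) -> int) :=
  forall (y : V -> rat) (x : V -> int),
    (forall v, (x v)%:~R = - \sum_w (Q v w)%:~R * y w) ->
    D%:~R * \sum_v y v * (x v)%:~R = (E x)%:~R.

Lemma bform_delta (V : finType) (Q : V -> V -> int) (p q : V) :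
  bform Q [ffun x => (x == p)%:R] [ffun x => (x == q)%:R] = Q p q.
Proof.
have sum_delta (F : V -> int) (r : V) : \sum_x (x == r)%:R * F x = F r.
  by rewrite (bigD1 r) //= eqxx mul1r big1 ?addr0 // => x /negbTE ->; rewrite mul0r.
rewrite /bform -(sum_delta (Q^~ q) p); apply: eq_bigr => x _.
rewrite -(sum_delta (fun y => (x == p)%:R * Q x y) q); apply: eq_bigr => y _.
by rewrite !ffunE mulrC.
Qed.

Lemma bform_negstd (N : nat) (u v : {ffun 'I_N -> int}) :
  bform (@negstd N) u v = - \sum_i u i * v i.
Proof.
rewrite /bform -sumrN; apply: eq_bigr => i _.
rewrite (bigD1 i) //= big1 => [|j ji].
  by rewrite /negstd eqxx addr0 mulrN mulr1 mulNr.
by rewrite /negstd eq_sym (negbTE ji) oppr0 mulr0 mul0r.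
Qed.

Lemma embedding_gram (V : finType) (Q : V -> V -> int) (N : nat) :
  lattice_embeds Q (@negstd N) ->
  exists phi : V -> 'I_N -> int, forall p q, \sum_i phi p i * phi q i = - Q p q.
Proof.
move=> [f [_ f_isometry]].
exists (fun p => f [ffun x => (x == p)%:R]) => p q.
by rewrite -bform_delta -f_isometry bform_negstd opprK.
Qed.

Section DualVector.

Variables (U : finType) (N : nat) (Q : U -> U -> int) (phi : U -> 'I_N -> int).
Hypotheses (cardU : #|U| = N) (nonsingQ : nonsingular_form Q)
  (gram : forall p q, \sum_i phi p i * phi q i = - Q p q).

Lemma dual_vector_exists (i : 'I_N) :
  exists y : U -> rat, forall k, \sum_q y q * (phi q k)%:~R = (i == k)%:R.
Proof.
pose h (r : 'I_N) : U := enum_val (cast_ord (esym cardU) r).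
pose h' (q : U) : 'I_N := cast_ord cardU (enum_rank q).
have hK : cancel h h' by move=> r; rewrite /h /h' enum_valK cast_ordKV.
have h'K : cancel h' h by move=> q; rewrite /h /h' cast_ordK enum_rankK.
have sum_h (F : U -> rat) : \sum_q F q = \sum_r F (h r).
  by rewrite (reindex h) //; exists h' => q _.
pose Phi : 'M[rat]_N := \matrix_(r, k) (phi (h r) k)%:~R.
have comb_Phi (v : 'rV[rat]_N) k : (v *m Phi) 0 k = \sum_q v 0 (h' q) * (phi q k)%:~R.
  by rewrite mxE sum_h; apply: eq_bigr => r _; rewrite hK mxE.
have Phi_unit : Phi \in unitmx.
  rewrite unitmxE unitfE; apply/negP => /det0P [v /negP v_neq0 vPhi0]; apply: v_neq0.
  have comb0 k : \sum_q v 0 (h' q) * (phi q k)%:~R = 0.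
    by rewrite -comb_Phi vPhi0 mxE.
  have v0 : forall q, v 0 (h' q) = 0.
    apply: nonsingQ => p.
    under eq_bigr => q _ do rewrite -[Q p q]opprK -gram rmorphN rmorph_sum mulNr mulr_suml.
    rewrite sumrN exchange_big /= big1 ?oppr0 // => k _.
    transitivity ((phi p k)%:~R * \sum_q v 0 (h' q) * (phi q k)%:~R).
      by rewrite mulr_sumr; apply: eq_bigr => q _; rewrite rmorphM /=; ring.
    by rewrite comb0 mulr0.
  by apply/eqP/rowP => r; rewrite !mxE -(hK r) v0.
exists (fun q => invmx Phi i (h' q)) => k.
have := comb_Phi (row i (invmx Phi)) k; rewrite -row_mul mulVmx // !mxE => ->.
by apply: eq_bigr => q _; rewrite mxE.
Qed.

Lemma dual_vector_coordinates (i : 'I_N) : exists y : U -> rat,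
  (forall p, (phi p i)%:~R = - \sum_q (Q p q)%:~R * y q) /\
  \sum_p y p * (phi p i)%:~R = 1.
Proof.
have [y y_dual] := dual_vector_exists i.
exists y; split => [p|]; last by rewrite y_dual eqxx.
transitivity (\sum_k (phi p k)%:~R * (i == k)%:R : rat).
  rewrite (bigD1 i) //= eqxx mulr1 big1 ?addr0 // => k ki.
  by rewrite eq_sym (negbTE ki) mulr0.
under eq_bigr do rewrite -y_dual mulr_sumr.
rewrite exchange_big -sumrN; apply: eq_bigr => q _ /=.
rewrite -[Q p q]opprK -gram rmorphN rmorph_sum mulNr opprK mulr_suml.
by apply: eq_bigr => k _; rewrite rmorphM /=; ring.
Qed.

End DualVector.

Lemma osum_mul (n : nat) (V : finType) (Q : V -> V -> int)
    (w : 'I_n * V -> rat) (p : 'I_n * V) :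
  \sum_q (osum Q p q)%:~R * w q = \sum_v (Q p.2 v)%:~R * w (p.1, v).
Proof.
rewrite (eq_bigr (fun q => (osum Q p (q.1, q.2))%:~R * w (q.1, q.2))) => [|[] //].
rewrite -(pair_bigA _ (fun j v => (osum Q p (j, v))%:~R * w (j, v))) /=.
rewrite (bigD1 p.1) //= [in X in _ + X]big1 ?addr0 => [|j jp].
  by apply: eq_bigr => v _; rewrite /osum /= eqxx.
by apply: big1 => v _; rewrite /osum /= eq_sym (negbTE jp) mul0r.
Qed.

Lemma nonsingular_form_osum (n : nat) (V : finType) (Q : V -> V -> int) :
  nonsingular_form Q -> nonsingular_form (@osum n _ Q).
Proof.
move=> nonsingQ w Qw0 [j v].
by apply: (nonsingQ (fun v' => w (j, v'))) => v'; rewrite -(osum_mul Q w (j, v')).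
Qed.

Lemma not_embeds_osum (V : finType) (Q : V -> V -> int) (D : int)
    (E : (V -> int) -> int) (va : V) (n : nat) :
  (0 < n)%N -> Q va va != 0 -> nonsingular_form Q -> scaled_dual_form Q D E ->
  (forall (X : 'I_n -> V -> int) (j0 : 'I_n), X j0 va != 0 -> \sum_j E (X j) != D) ->
  ~ lattice_embeds (@osum n _ Q) (@negstd (n * #|V|)).
Proof.
move=> n_gt0 Qva nonsingQ dualE sum_neqD /embedding_gram [phi gram].
pose j0 : 'I_n := Ordinal n_gt0.
have [i phi_i] : exists i, phi (j0, va) i != 0.
  apply/existsP; apply: contraR Qva => /existsPn phi0.
  rewrite -oppr_eq0 -(gram (j0, va) (j0, va)) big1 // => k _.
  by rewrite (eqP (negPn (phi0 k))) mul0r.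
have cardU : #|{: 'I_n * V}| = (n * #|V|)%N by rewrite card_prod card_ord.
have [y [phi_y y_phi]] :=
  dual_vector_coordinates cardU (nonsingular_form_osum (n := n) nonsingQ) gram i.
pose X j v := phi (j, v) i.
apply: (negP (sum_neqD X j0 phi_i)); apply/eqP/(@intr_inj rat).
rewrite rmorph_sum /=.
transitivity (D%:~R * \sum_p y p * (phi p i)%:~R : rat); last by rewrite y_phi mulr1.
rewrite (eq_bigr (fun p => y (p.1, p.2) * (X p.1 p.2)%:~R)) => [|[] //].
rewrite -(pair_bigA _ (fun j v => y (j, v) * (X j v)%:~R)) mulr_sumr /=.
apply: eq_bigr => j _; symmetry; apply: dualE => v.
by rewrite phi_y osum_mul.
Qed.

Lemma sqr_le3 (c : int) : c ^+ 2 <= 3 -> c = -1 \/ c = 0 \/ c = 1.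
Proof. by nia. Qed.

(* [qA2] and [qA3] are 3/2 and 4 times the inverse forms of the root lattices A_2
   and A_3, i.e. of the legs (2,2) and (2,2,2). *)
Definition qA2 (x y : int) : int := x ^+ 2 + x * y + y ^+ 2.

Lemma qA2_ge0 x y : 0 <= qA2 x y.
Proof. by rewrite /qA2; nia. Qed.

Lemma qA2_le0 x y : qA2 x y <= 0 -> x = 0 /\ y = 0.
Proof. by rewrite /qA2; nia. Qed.

Definition qA3 (x y z : int) : int :=
  3 * x ^+ 2 + 4 * y ^+ 2 + 3 * z ^+ 2 + 4 * x * y + 2 * x * z + 4 * y * z.

Lemma qA3_sos x y z : qA3 x y z =
  (x + y + z) ^+ 2 + (x + y) ^+ 2 + (y + z) ^+ 2 + x ^+ 2 + y ^+ 2 + z ^+ 2.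
Proof. by rewrite /qA3; ring. Qed.

Lemma qA3_ge0 x y z : 0 <= qA3 x y z.
Proof. by rewrite qA3_sos; nia. Qed.

Lemma qA3_lt3 x y z : qA3 x y z < 3 -> x = 0 /\ y = 0 /\ z = 0.
Proof.
rewrite qA3_sos => small.
have := sqr_ge0 (x + y + z); have := sqr_ge0 (x + y); have := sqr_ge0 (y + z) => *.
have [|[|]] : x = -1 \/ x = 0 \/ x = 1 by apply: sqr_le3; nia.
all: have [|[|]] : y = -1 \/ y = 0 \/ y = 1 by apply: sqr_le3; nia.
all: have [|[|]] : z = -1 \/ z = 0 \/ z = 1 by apply: sqr_le3; nia.
all: by move=> *; subst; move: small => /=; lia.
Qed.

Section OneLargeTerm.

Variables (I : finType) (j0 : I) (E : I -> int) (M : int).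
Hypotheses (E_ge0 : forall j, 0 <= E j) (E0_gt : 6 * M < E j0).
Hypothesis sumE : \sum_j E j = 12 * M.

Let S : int := \sum_(j | j != j0) E j.

Let sumE0 : E j0 + S = 12 * M.
Proof. by rewrite -sumE (bigD1 j0). Qed.

Let S_ge0 : 0 <= S.
Proof. exact: sumr_ge0. Qed.

Let others_lt (j : I) : j != j0 -> E j < 6 * M.
Proof.
move=> jj0; have : E j <= S by rewrite /S (bigD1 j) //= lerDl sumr_ge0.
by lia.
Qed.

Lemma one_large_term_mod4 :
  (forall j, E j < 6 * M -> (4 %| E j)%Z) ->
  (E j0 <= 12 * M -> (4 %| E j0 - 2)%Z) -> False.
Proof.
move=> small large.
have S4 : (4 %| S)%Z by rewrite /S; apply: rpred_sum => j /others_lt/small.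
by have := large ltac:(lia); lia.
Qed.

Lemma one_large_term_mod36 (e : I -> int) :
  1 <= M -> ~~ (3 %| M)%Z -> (forall j, 0 <= e j) ->
  (forall j, E j < 6 * M -> [/\ 3 * M * e j <= E j,
     (4 %| E j - 2 * e j)%Z & (9 %| E j - 3 * M * e j)%Z]) ->
  (E j0 <= 12 * M -> [/\ 6 * M + 3 * M * e j0 <= E j0,
     (4 %| E j0 - 2 - 2 * e j0)%Z & (9 %| E j0 - 6 * M - 3 * M * e j0)%Z]) ->
  False.
Proof.
move=> M_ge1 M_3 e_ge0 small large.
pose D : int := \sum_(j | j != j0) e j.
have [S_ge S4 S9] : [/\ 3 * M * D <= S, (4 %| S - 2 * D)%Z & (9 %| S - 3 * M * D)%Z].
  rewrite /S /D !mulr_sumr -!sumrB; split.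
  - by apply: ler_sum => j /others_lt/small[].
  - by apply: rpred_sum => j /others_lt/small[].
  - by apply: rpred_sum => j /others_lt/small[].
have D_ge0 : 0 <= D by apply: sumr_ge0.
have [E0_ge E04 E09] := large ltac:(lia).
have M_gt0 : 0 < M by lia.
have : M * (e j0 + D) <= M * 2 by lia.
rewrite ler_pM2l // => t_le2.
have := e_ge0 j0 => e0_ge0.
(* Modulo 4, e j0 + D is odd, hence 1; then modulo 9, 3 divides M. *)
have [t0|[t1|t2]] : e j0 + D = 0 \/ e j0 + D = 1 \/ e j0 + D = 2 by lia.
- by lia.
- have : M * e j0 + M * D = M by rewrite -mulrDr t1 mulr1.
  by lia.
- by lia.
Qed.

End OneLargeTerm.

Lemma big_option (R : nmodType) (T : finType) (F : option T -> R) :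
  \sum_(v : option T) F v = F None + \sum_(t : T) F (Some t).
Proof.
rewrite (bigD1 None) //= (reindex_omap Some id) //=; last by case.
by congr (_ + _); apply: eq_bigl => t; rewrite eqxx.
Qed.

Lemma ord_rect_lift n (P : 'I_n.+1 -> Prop) :
  P ord0 -> (forall j, P (lift ord0 j)) -> forall i, P i.
Proof. by move=> P0 PS i; case: (unliftP ord0 i) => [j ->|->]. Qed.

Lemma QX_None b k : @QX b k None None = - b%:Z.
Proof. by []. Qed.

(* Off the centre, the entries of [QX b k] do not depend on [b]: compute them as
   those of [QX 0 k]. *)
Ltac eval_QX := rewrite ?QX_None; repeat match goal with
  | |- context [@QX ?b ?k ?v ?w] =>
      let r := eval vm_compute in (@QX 0 k v w) in
      rewrite [@QX b k v w](_ : _ = r); last by vm_compute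
  end.

Module Case1.

Local Notation V := (pvert (X_legs 1)).

(* [a] is the vertex of the leg (2); [b_i] and [c_i] are the vertices of the
   second and third legs, numbered from the centre [None].  They are typed at
   ['I_6] first: elaborated directly at type [V], such terms make the unifier
   evaluate the continued fractions, which is very slow. *)
Definition a : V := Some (ord0 : 'I_6).
Definition b1 : V := Some (lift ord0 ord0 : 'I_6).
Definition b2 : V := Some (lift ord0 (lift ord0 ord0) : 'I_6).
Definition c1 : V := Some (lift ord0 (lift ord0 (lift ord0 ord0)) : 'I_6).
Definition c2 : V := Some (lift ord0 (lift ord0 (lift ord0 (lift ord0 ord0))) : 'I_6).
Definition c3 : V :=
  Some (lift ord0 (lift ord0 (lift ord0 (lift ord0 (lift ord0 ord0)))) : 'I_6).

Lemma sum_V (R : nmodType) (F : V -> R) :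
  \sum_v F v = F None + F a + F b1 + F b2 + F c1 + F c2 + F c3.
Proof. by rewrite big_option (big_ord_recl 5) !big_ord_recl big_ord0 !addrA addr0. Qed.

Lemma V_ind (P : V -> Prop) :
  P None -> P a -> P b1 -> P b2 -> P c1 -> P c2 -> P c3 -> forall v, P v.
Proof.
by move=> Pz Pa Pb1 Pb2 Pc1 Pc2 Pc3 [i|] //; do 6 (elim/ord_rect_lift: i => // i); case: i.
Qed.

Lemma QX_mul b (w : V -> rat) :
  [/\ \sum_v (@QX b 1 None v)%:~R * w v = - b%:R * w None + w a + w b1 + w c1,
      \sum_v (@QX b 1 a v)%:~R * w v = w None - 2 * w a,
      \sum_v (@QX b 1 b1 v)%:~R * w v = w None - 2 * w b1 + w b2
        /\ \sum_v (@QX b 1 b2 v)%:~R * w v = w b1 - 2 * w b2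
    & [/\ \sum_v (@QX b 1 c1 v)%:~R * w v = w None - 2 * w c1 + w c2,
          \sum_v (@QX b 1 c2 v)%:~R * w v = w c1 - 2 * w c2 + w c3
        & \sum_v (@QX b 1 c3 v)%:~R * w v = w c2 - 2 * w c3]].
Proof. by split; [ | | split | split]; rewrite sum_V; eval_QX; ring. Qed.

Definition M (b : nat) : int := 12 * b%:Z - 23.
Definition legs (x : V -> int) : int :=
  6 * x a ^+ 2 + 8 * qA2 (x b1) (x b2) + 3 * qA3 (x c1) (x c2) (x c3).
Definition centre (x : V -> int) : int :=
  12 * x None + 6 * x a + 4 * (2 * x b1 + x b2) + 3 * (3 * x c1 + 2 * x c2 + x c3).
Definition dual (b : nat) (x : V -> int) : int := M b * legs x + centre x ^+ 2.

Lemma dualE b : scaled_dual_form (@QX b 1) (12 * M b) (dual b).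
Proof.
move=> y x x_y; have [rz ra [rb1 rb2] [rc1 rc2 rc3]] := QX_mul b y.
rewrite sum_V /dual /M /legs /centre /qA2 /qA3 !(rmorphD, rmorphB, rmorphM, rmorphXn) /=.
by rewrite !x_y rz ra rb1 rb2 rc1 rc2 rc3; ring.
Qed.

Lemma nonsingular_QX b : (2 <= b)%N -> nonsingular_form (@QX b 1).
Proof.
move=> b_ge2 w Qw0; have [rz ra [rb1 rb2] [rc1 rc2 rc3]] := QX_mul b w.
move: (Qw0 None) (Qw0 a) (Qw0 b1) (Qw0 b2) (Qw0 c1) (Qw0 c2) (Qw0 c3).
rewrite rz ra rb1 rb2 rc1 rc2 rc3 => {rz ra rb1 rb2 rc1 rc2 rc3} rz ra rb1 rb2 rc1 rc2 rc3.
have b_ge2' : (2 : rat) <= b%:R by rewrite ler_nat.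
(* [centre] combines the rows of [Q w] into [M b] times the centre coordinate. *)
have wz : w None = 0.
  have M_neq0 : (12 * b%:R - 23 : rat) != 0 by apply: lt0r_neq0; lra.
  by apply: (mulfI M_neq0); rewrite mulr0; lra.
by apply: V_ind; lra.
Qed.

Section Arithmetic.

Variables (b : nat) (x : V -> int).
Hypothesis b_ge2 : (2 <= b)%N.

Let M_ge1 : 1 <= M b. Proof. by rewrite /M; lia. Qed.

Let centre_sqr_ge0 : 0 <= centre x ^+ 2. Proof. exact: sqr_ge0. Qed.

Let legs_terms_ge0 :
  [/\ 0 <= x a ^+ 2, 0 <= qA2 (x b1) (x b2) & 0 <= qA3 (x c1) (x c2) (x c3)].
Proof. by split; [exact: sqr_ge0 | exact: qA2_ge0 | exact: qA3_ge0]. Qed.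

Lemma dual_ge0 : 0 <= dual b x.
Proof. by rewrite /dual /legs; case: legs_terms_ge0; nia. Qed.

Lemma legs_lt6 : legs x < 6 ->
  [/\ x a = 0, x b1 = 0, x b2 = 0, x c1 = 0 & x c2 = 0 /\ x c3 = 0].
Proof.
rewrite /legs => small; case: legs_terms_ge0 => *.
have [-> ->] : x b1 = 0 /\ x b2 = 0 by apply: qA2_le0; nia.
have [-> [-> ->]] : x c1 = 0 /\ x c2 = 0 /\ x c3 = 0 by apply: qA3_lt3; nia.
by split => //; nia.
Qed.

Lemma legs_le12 : x a != 0 -> legs x <= 12 ->
  [/\ x a = -1 \/ x a = 1, x b1 = 0, x b2 = 0, x c1 = 0 & x c2 = 0 /\ x c3 = 0].
Proof.
rewrite /legs => a_neq0 small; case: legs_terms_ge0 => *.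
have [-> ->] : x b1 = 0 /\ x b2 = 0 by apply: qA2_le0; nia.
have [-> [-> ->]] : x c1 = 0 /\ x c2 = 0 /\ x c3 = 0 by apply: qA3_lt3; nia.
by split => //; have := @sqr_le3 (x a) ltac:(nia); lia.
Qed.

Lemma dual_gt : x a != 0 -> 6 * M b < dual b x.
Proof.
move=> a_neq0; rewrite /dual.
have [small|] := ltP (legs x) 7; last by nia.
have [ha hb1 hb2 hc1 [hc2 hc3]] := legs_le12 a_neq0 ltac:(lia).
move: small; rewrite /legs /centre /qA2 /qA3 hb1 hb2 hc1 hc2 hc3.
by case: ha => ->; nia.
Qed.

Lemma dual_small : dual b x < 6 * M b -> (4 %| dual b x)%Z.
Proof.
rewrite /dual => small; have [ha hb1 hb2 hc1 [hc2 hc3]] := legs_lt6 ltac:(nia).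
rewrite /legs /centre /qA2 /qA3 ha hb1 hb2 hc1 hc2 hc3.
by nia.
Qed.

Lemma dual_large : x a != 0 -> dual b x <= 12 * M b -> (4 %| dual b x - 2)%Z.
Proof.
rewrite /dual => a_neq0 large.
have [ha hb1 hb2 hc1 [hc2 hc3]] := legs_le12 a_neq0 ltac:(nia).
rewrite /legs /centre /qA2 /qA3 /M hb1 hb2 hc1 hc2 hc3.
by case: ha => ->; nia.
Qed.

End Arithmetic.

Lemma not_embeds b n : (2 <= b)%N -> (1 <= n)%N ->
  ~ lattice_embeds (@osum n _ (@QX b 1)) (@negstd (n * #|V|)).
Proof.
move=> b_ge2 n_ge1.
apply: (not_embeds_osum (va := a) n_ge1 _ (nonsingular_QX b_ge2) (@dualE b)).
  by vm_compute.
move=> X j0 a_neq0; apply/eqP => sumE.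
apply: (one_large_term_mod4 (E := fun j => dual b (X j)) _ (dual_gt b_ge2 a_neq0) sumE).
- by move=> j; exact: dual_ge0.
- by move=> j; exact: dual_small.
- exact: dual_large.
Qed.

End Case1.

Module Case5.

Local Notation V := (pvert (X_legs 5)).

Definition a : V := Some (ord0 : 'I_5).
Definition b1 : V := Some (lift ord0 ord0 : 'I_5).
Definition c1 : V := Some (lift ord0 (lift ord0 ord0) : 'I_5).
Definition c2 : V := Some (lift ord0 (lift ord0 (lift ord0 ord0)) : 'I_5).
Definition c3 : V := Some (lift ord0 (lift ord0 (lift ord0 (lift ord0 ord0))) : 'I_5).

Lemma sum_V (R : nmodType) (F : V -> R) :
  \sum_v F v = F None + F a + F b1 + F c1 + F c2 + F c3.
Proof. by rewrite big_option (big_ord_recl 4) !big_ord_recl big_ord0 !addrA addr0. Qed.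

Lemma V_ind (P : V -> Prop) :
  P None -> P a -> P b1 -> P c1 -> P c2 -> P c3 -> forall v, P v.
Proof.
by move=> Pz Pa Pb1 Pc1 Pc2 Pc3 [i|] //; do 5 (elim/ord_rect_lift: i => // i); case: i.
Qed.

Lemma QX_mul b (w : V -> rat) :
  [/\ \sum_v (@QX b 5 None v)%:~R * w v = - b%:R * w None + w a + w b1 + w c1,
      \sum_v (@QX b 5 a v)%:~R * w v = w None - 2 * w a,
      \sum_v (@QX b 5 b1 v)%:~R * w v = w None - 3 * w b1
    & [/\ \sum_v (@QX b 5 c1 v)%:~R * w v = w None - 2 * w c1 + w c2,
          \sum_v (@QX b 5 c2 v)%:~R * w v = w c1 - 2 * w c2 + w c3
        & \sum_v (@QX b 5 c3 v)%:~R * w v = w c2 - 2 * w c3]].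
Proof. by split; [ | | | split]; rewrite sum_V; eval_QX; ring. Qed.

Definition M (b : nat) : int := 12 * b%:Z - 19.
Definition legs (x : V -> int) : int :=
  6 * x a ^+ 2 + 4 * x b1 ^+ 2 + 3 * qA3 (x c1) (x c2) (x c3).
Definition centre (x : V -> int) : int :=
  12 * x None + 6 * x a + 4 * x b1 + 3 * (3 * x c1 + 2 * x c2 + x c3).
Definition dual (b : nat) (x : V -> int) : int := M b * legs x + centre x ^+ 2.

Lemma dualE b : scaled_dual_form (@QX b 5) (12 * M b) (dual b).
Proof.
move=> y x x_y; have [rz ra rb1 [rc1 rc2 rc3]] := QX_mul b y.
rewrite sum_V /dual /M /legs /centre /qA3 !(rmorphD, rmorphB, rmorphM, rmorphXn) /=.
by rewrite !x_y rz ra rb1 rc1 rc2 rc3; ring.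
Qed.

Lemma nonsingular_QX b : (2 <= b)%N -> nonsingular_form (@QX b 5).
Proof.
move=> b_ge2 w Qw0; have [rz ra rb1 [rc1 rc2 rc3]] := QX_mul b w.
move: (Qw0 None) (Qw0 a) (Qw0 b1) (Qw0 c1) (Qw0 c2) (Qw0 c3).
rewrite rz ra rb1 rc1 rc2 rc3 => {rz ra rb1 rc1 rc2 rc3} rz ra rb1 rc1 rc2 rc3.
have b_ge2' : (2 : rat) <= b%:R by rewrite ler_nat.
have wz : w None = 0.
  have M_neq0 : (12 * b%:R - 19 : rat) != 0 by apply: lt0r_neq0; lra.
  by apply: (mulfI M_neq0); rewrite mulr0; lra.
by apply: V_ind; lra.
Qed.

Section Arithmetic.

Variables (b : nat) (x : V -> int).
Hypothesis b_ge2 : (2 <= b)%N.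

Let M_ge1 : 1 <= M b. Proof. by rewrite /M; lia. Qed.

Let centre_sqr_ge0 : 0 <= centre x ^+ 2. Proof. exact: sqr_ge0. Qed.

Let legs_terms_ge0 : [/\ 0 <= x a ^+ 2, 0 <= x b1 ^+ 2 & 0 <= qA3 (x c1) (x c2) (x c3)].
Proof. by split; [exact: sqr_ge0 | exact: sqr_ge0 | exact: qA3_ge0]. Qed.

Lemma dual_ge0 : 0 <= dual b x.
Proof. by rewrite /dual /legs; case: legs_terms_ge0; nia. Qed.

Lemma legs_lt6 : legs x < 6 ->
  [/\ x a = 0, x b1 = -1 \/ x b1 = 0 \/ x b1 = 1, x c1 = 0, x c2 = 0 & x c3 = 0].
Proof.
rewrite /legs => small; case: legs_terms_ge0 => *.
have [-> [-> ->]] : x c1 = 0 /\ x c2 = 0 /\ x c3 = 0 by apply: qA3_lt3; nia.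
by split => //; [nia | apply: sqr_le3; nia].
Qed.

Lemma legs_le12 : x a != 0 -> legs x <= 12 ->
  [/\ x a = -1 \/ x a = 1, x b1 = -1 \/ x b1 = 0 \/ x b1 = 1,
      x c1 = 0, x c2 = 0 & x c3 = 0].
Proof.
rewrite /legs => a_neq0 small; case: legs_terms_ge0 => *.
have [-> [-> ->]] : x c1 = 0 /\ x c2 = 0 /\ x c3 = 0 by apply: qA3_lt3; nia.
split => //; last by apply: sqr_le3; nia.
by have := @sqr_le3 (x a) ltac:(nia); lia.
Qed.

Lemma dual_gt : x a != 0 -> 6 * M b < dual b x.
Proof.
move=> a_neq0; rewrite /dual.
have [small|] := ltP (legs x) 7; last by nia.
have [ha hb1 hc1 hc2 hc3] := legs_le12 a_neq0 ltac:(lia).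
move: small; rewrite /legs /centre /qA3 hc1 hc2 hc3.
by case: ha => ->; case: hb1 => [|[|]] ->; nia.
Qed.

Lemma dual_small : dual b x < 6 * M b -> (4 %| dual b x)%Z.
Proof.
rewrite /dual => small; have [ha hb1 hc1 hc2 hc3] := legs_lt6 ltac:(nia).
rewrite /legs /centre /qA3 /M ha hc1 hc2 hc3.
by case: hb1 => [|[|]] ->; nia.
Qed.

Lemma dual_large : x a != 0 -> dual b x <= 12 * M b -> (4 %| dual b x - 2)%Z.
Proof.
rewrite /dual => a_neq0 large; have [ha hb1 hc1 hc2 hc3] := legs_le12 a_neq0 ltac:(nia).
rewrite /legs /centre /qA3 /M hc1 hc2 hc3.
by case: ha => ->; case: hb1 => [|[|]] ->; nia.
Qed.

End Arithmetic.

Lemma not_embeds b n : (2 <= b)%N -> (1 <= n)%N ->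
  ~ lattice_embeds (@osum n _ (@QX b 5)) (@negstd (n * #|V|)).
Proof.
move=> b_ge2 n_ge1.
apply: (not_embeds_osum (va := a) n_ge1 _ (nonsingular_QX b_ge2) (@dualE b)).
  by vm_compute.
move=> X j0 a_neq0; apply/eqP => sumE.
apply: (one_large_term_mod4 (E := fun j => dual b (X j)) _ (dual_gt b_ge2 a_neq0) sumE).
- by move=> j; exact: dual_ge0.
- by move=> j; exact: dual_small.
- exact: dual_large.
Qed.

End Case5.

Module Case7.

Local Notation V := (pvert (X_legs 7)).

Definition a : V := Some (ord0 : 'I_4).
Definition b1 : V := Some (lift ord0 ord0 : 'I_4).
Definition b2 : V := Some (lift ord0 (lift ord0 ord0) : 'I_4).
Definition c1 : V := Some (lift ord0 (lift ord0 (lift ord0 ord0)) : 'I_4).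

Lemma sum_V (R : nmodType) (F : V -> R) :
  \sum_v F v = F None + F a + F b1 + F b2 + F c1.
Proof. by rewrite big_option (big_ord_recl 3) !big_ord_recl big_ord0 !addrA addr0. Qed.

Lemma V_ind (P : V -> Prop) : P None -> P a -> P b1 -> P b2 -> P c1 -> forall v, P v.
Proof.
by move=> Pz Pa Pb1 Pb2 Pc1 [i|] //; do 4 (elim/ord_rect_lift: i => // i); case: i.
Qed.

Lemma QX_mul b (w : V -> rat) :
  [/\ \sum_v (@QX b 7 None v)%:~R * w v = - b%:R * w None + w a + w b1 + w c1,
      \sum_v (@QX b 7 a v)%:~R * w v = w None - 2 * w a,
      \sum_v (@QX b 7 b1 v)%:~R * w v = w None - 2 * w b1 + w b2,
      \sum_v (@QX b 7 b2 v)%:~R * w v = w b1 - 2 * w b2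
    & \sum_v (@QX b 7 c1 v)%:~R * w v = w None - 4 * w c1].
Proof. by split; rewrite sum_V; eval_QX; ring. Qed.

Definition M (b : nat) : int := 12 * b%:Z - 17.
Definition legs (x : V -> int) : int :=
  6 * x a ^+ 2 + 8 * qA2 (x b1) (x b2) + 3 * x c1 ^+ 2.
Definition centre (x : V -> int) : int :=
  12 * x None + 6 * x a + 4 * (2 * x b1 + x b2) + 3 * x c1.
Definition dual (b : nat) (x : V -> int) : int := M b * legs x + centre x ^+ 2.

Lemma dualE b : scaled_dual_form (@QX b 7) (12 * M b) (dual b).
Proof.
move=> y x x_y; have [rz ra rb1 rb2 rc1] := QX_mul b y.
rewrite sum_V /dual /M /legs /centre /qA2 !(rmorphD, rmorphB, rmorphM, rmorphXn) /=.
by rewrite !x_y rz ra rb1 rb2 rc1; ring.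
Qed.

Lemma nonsingular_QX b : (2 <= b)%N -> nonsingular_form (@QX b 7).
Proof.
move=> b_ge2 w Qw0; have [rz ra rb1 rb2 rc1] := QX_mul b w.
move: (Qw0 None) (Qw0 a) (Qw0 b1) (Qw0 b2) (Qw0 c1).
rewrite rz ra rb1 rb2 rc1 => {rz ra rb1 rb2 rc1} rz ra rb1 rb2 rc1.
have b_ge2' : (2 : rat) <= b%:R by rewrite ler_nat.
have wz : w None = 0.
  have M_neq0 : (12 * b%:R - 17 : rat) != 0 by apply: lt0r_neq0; lra.
  by apply: (mulfI M_neq0); rewrite mulr0; lra.
by apply: V_ind; lra.
Qed.

Section Arithmetic.

Variables (b : nat) (x : V -> int).
Hypothesis b_ge2 : (2 <= b)%N.

Let M_ge1 : 1 <= M b. Proof. by rewrite /M; lia. Qed.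

Let centre_sqr_ge0 : 0 <= centre x ^+ 2. Proof. exact: sqr_ge0. Qed.

Let legs_terms_ge0 : [/\ 0 <= x a ^+ 2, 0 <= qA2 (x b1) (x b2) & 0 <= x c1 ^+ 2].
Proof. by split; [exact: sqr_ge0 | exact: qA2_ge0 | exact: sqr_ge0]. Qed.

Lemma dual_ge0 : 0 <= dual b x.
Proof. by rewrite /dual /legs; case: legs_terms_ge0; nia. Qed.

Lemma legs_lt6 : legs x < 6 ->
  [/\ x a = 0, x b1 = 0, x b2 = 0 & x c1 = -1 \/ x c1 = 0 \/ x c1 = 1].
Proof.
rewrite /legs => small; case: legs_terms_ge0 => *.
have [-> ->] : x b1 = 0 /\ x b2 = 0 by apply: qA2_le0; nia.
by split; [nia | | | apply: sqr_le3; nia].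
Qed.

Lemma legs_le12 : x a != 0 -> legs x <= 12 ->
  [/\ x a = -1 \/ x a = 1, x b1 = 0, x b2 = 0 & x c1 = -1 \/ x c1 = 0 \/ x c1 = 1].
Proof.
rewrite /legs => a_neq0 small; case: legs_terms_ge0 => *.
have [-> ->] : x b1 = 0 /\ x b2 = 0 by apply: qA2_le0; nia.
split => //; last by apply: sqr_le3; nia.
by have := @sqr_le3 (x a) ltac:(nia); lia.
Qed.

Lemma dual_gt : x a != 0 -> 6 * M b < dual b x.
Proof.
move=> a_neq0; rewrite /dual.
have [small|] := ltP (legs x) 7; last by nia.
have [ha hb1 hb2 hc1] := legs_le12 a_neq0 ltac:(lia).
move: small; rewrite /legs /centre /qA2 hb1 hb2.
by case: ha => ->; case: hc1 => [|[|]] ->; nia.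
Qed.

Lemma dual_small : dual b x < 6 * M b ->
  [/\ 3 * M b * x c1 ^+ 2 <= dual b x, (4 %| dual b x - 2 * x c1 ^+ 2)%Z
    & (9 %| dual b x - 3 * M b * x c1 ^+ 2)%Z].
Proof.
rewrite /dual => small; have [ha hb1 hb2 hc1] := legs_lt6 ltac:(nia).
rewrite /legs /centre /qA2 /M ha hb1 hb2.
by case: hc1 => [|[|]] ->; split; nia.
Qed.

Lemma dual_large : x a != 0 -> dual b x <= 12 * M b ->
  [/\ 6 * M b + 3 * M b * x c1 ^+ 2 <= dual b x, (4 %| dual b x - 2 - 2 * x c1 ^+ 2)%Z
    & (9 %| dual b x - 6 * M b - 3 * M b * x c1 ^+ 2)%Z].
Proof.
rewrite /dual => a_neq0 large; have [ha hb1 hb2 hc1] := legs_le12 a_neq0 ltac:(nia).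
rewrite /legs /centre /qA2 /M hb1 hb2.
by case: ha => ->; case: hc1 => [|[|]] ->; split; nia.
Qed.

End Arithmetic.

Lemma not_embeds b n : (2 <= b)%N -> (1 <= n)%N ->
  ~ lattice_embeds (@osum n _ (@QX b 7)) (@negstd (n * #|V|)).
Proof.
move=> b_ge2 n_ge1.
apply: (not_embeds_osum (va := a) n_ge1 _ (nonsingular_QX b_ge2) (@dualE b)).
  by vm_compute.
move=> X j0 a_neq0; apply/eqP => sumE.
apply: (one_large_term_mod36 (E := fun j => dual b (X j)) _ (dual_gt b_ge2 a_neq0) sumE
          (e := fun j => X j c1 ^+ 2)) => [j|||j|j|].
- exact: dual_ge0.
- by rewrite /M; lia.
- by rewrite /M; lia.
- exact: sqr_ge0.
- exact: dual_small.
- exact: dual_large.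
Qed.

End Case7.

Theorem mainTheorem11 (b k n : nat) :
  (2 <= b)%N -> k \in [:: 1%N; 5%N; 7%N] -> (1 <= n)%N ->
  ~ lattice_embeds (@osum n _ (@QX b k))
                   (@negstd (n * #|pvert (X_legs k)|)).
Proof.
move=> b_ge2 /[swap] n_ge1; rewrite !inE => /or3P[] /eqP->.
- exact: Case1.not_embeds.
- exact: Case5.not_embeds.
- exact: Case7.not_embeds.
Qed.
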